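(* Let $f_0(n)=1$ for odd $n$ and $f_0(n)=0$ for even $n$. Then for every $m\ge1$ and $1\le k\le n$, $c_m(n,k)$ equals the number of words of length $n-1$ over the alphabet $\{0,1,\ldots,m\}$ with exactly $k-1$ letters equal to $m$ that avoid runs of zeros of odd length (every maximal block of consecutive zeros has even length).
   Context: For $m\ge 1$, $f_m$ is the invert transform of $f_{m-1}$, i.e. $f_m(n)=f_{m-1}(n)+\sum_{i=1}^{n-1}f_{m-1}(i)f_m(n-i)$ for $n\ge1$. For $m\ge1$ the numbers $c_m(n,k)$, $0\le k\le n$, are defined by $c_m(0,0)=1$, $c_m(n,0)=0$ for $n\ge1$, and $c_m(n,k)=\sum_{i=1}^{n-k+1}f_{m-1}(i)\,c_m(n-i,k-1)$ for $1\le k\le n$. Words may be empty. *)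

From mathcomp Require Import all_boot.
Set Implicit Arguments. Unset Strict Implicit. Unset Printing Implicit Defensive.

(* Sequences are indexed from 1; the value at index 0 is irrelevant (set to 0). *)

Definition f0 (n : nat) : nat := odd n.

(* invert_seq g n = [:: h 1; ...; h n] where h is the invert transform of g:
   h n = g n + \sum_{i=1}^{n-1} g i * h (n - i). *)
Fixpoint invert_seq (g : nat -> nat) (n : nat) : seq nat :=
  match n with
  | 0 => [::]
  | n'.+1 =>
      let s := invert_seq g n' in
      rcons s (g n'.+1 + \sum_(1 <= i < n'.+1) g i * nth 0 s (n'.+1 - i).-1)
  end.

Definition invert (g : nat -> nat) (n : nat) : nat :=
  if n is 0 then 0 else nth 0 (invert_seq g n) n.-1.

Fixpoint f (m : nat) : nat -> nat :=
  match m with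
  | 0 => f0
  | m'.+1 => invert (f m')
  end.

Fixpoint c_aux (g : nat -> nat) (n k : nat) : nat :=
  match k with
  | 0 => (n == 0 : nat)
  | k'.+1 => \sum_(1 <= i < (n - k'.+1).+2) g i * c_aux g (n - i) k'
  end.

Definition c (m n k : nat) : nat := c_aux (f m.-1) n k.

Definition max_zero_block (s : seq nat) (i j : nat) : bool :=
  [&& i < j, j <= size s,
      all (fun p => nth 1 s p == 0) (iota i (j - i)),
      (i == 0) || (nth 1 s i.-1 != 0) &
      (j == size s) || (nth 1 s j != 0)].

Definition no_odd_zero_runs (s : seq nat) : bool :=
  [forall i : 'I_(size s).+1, forall j : 'I_(size s).+1,
     max_zero_block s i j ==> ~~ odd (j - i)].

Definition nwords (m L r : nat) : nat :=
  #|[set w : L.-tuple 'I_m.+1 |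
      (count (fun x : 'I_m.+1 => val x == m) w == r)
      && no_odd_zero_runs (map val w)]|.

From mathcomp Require Import all_boot zify.
Set Implicit Arguments. Unset Strict Implicit. Unset Printing Implicit Defensive.

(* Call a word good if all its maximal zero runs have even length, and let
   g_m(L) be the number of good words of length L over {0,...,m}.  Then
   f_m(L+1) = g_m(L): for m = 0 the only word is 0^L, which is good iff L is
   even, and splitting a word over {0,...,m+1} at its first letter m+1, as
   u (m+1) v with u over {0,...,m}, yields exactly the invert-transform
   recurrence, because the nonzero letter m+1 separates the zero runs of u from
   those of v.  The same splitting of the good words of length n-1 over
   {0,...,m} with k-1 letters m yields the recurrence defining c_m(n,k). *)

Fixpoint words (m L : nat) : seq (seq nat) :=
  if L is L'.+1 then [seq x :: w | x <- index_iota 0 m.+1, w <- words m L']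
  else [:: [::]].

Lemma big_words0 m (F : seq nat -> nat) : \sum_(w <- words m 0) F w = F [::].
Proof. by rewrite big_seq1. Qed.

Lemma big_wordsS m L (F : seq nat -> nat) :
  \sum_(w <- words m L.+1) F w = \sum_(0 <= x < m.+1) \sum_(w <- words m L) F (x :: w).
Proof. exact: big_allpairs_dep. Qed.

Lemma mem_words m L w : (w \in words m L) = (size w == L) && all (fun x => x < m.+1) w.
Proof.
elim: L w => [|L IH] w; first by rewrite mem_seq1; case: w.
case: w => [|x w]; first by apply/allpairsP => [[[y v] [_ _]]].
rewrite [size _]/= eqSS [all _ _]/=.
apply/allpairsP/idP => [[[y v] /= [hy hv [-> ->]]]|].
  by move: hy hv; rewrite mem_index_iota IH => /andP[_ ->] ->.
move=> /andP[hs /andP[hx ha]]; exists (x, w) => /=.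
by rewrite mem_index_iota IH hs.
Qed.

Lemma words0 L : words 0 L = [:: nseq L 0].
Proof. by elim: L => //= L ->. Qed.

Lemma uniq_words m L : uniq (words m L).
Proof.
elim: L => [|L IH] //; apply: allpairs_uniq => //; first exact: iota_uniq.
by move=> [a b] [c d] _ _ /= [-> ->].
Qed.

Lemma card_tuples_words m L (P : pred (seq nat)) :
  #|[set w : L.-tuple 'I_m.+1 | P (map val w)]| = \sum_(w <- words m L) P w.
Proof.
have val_enum : perm_eq [seq map val (tval t) | t <- enum {: L.-tuple 'I_m.+1}]
                        (words m L).
  apply: uniq_perm; last move=> w; rewrite ?uniq_words //.
    by rewrite map_inj_uniq ?enum_uniq // => t1 t2 /(inj_map val_inj)/val_inj.
  rewrite mem_words; apply/mapP/andP => [[t _ ->]|[/eqP hs /allP ha]].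
    rewrite size_map size_tuple; split => //.
    by apply/allP => x /mapP [y _ ->]; exact: ltn_ord.
  have hs' : size (map (@inord m) w) == L by rewrite size_map hs.
  exists (Tuple hs'); first by rewrite mem_enum.
  by rewrite /= -map_comp map_id_in // => x /ha /inordK.
rewrite cardsE cardE /enum_mem size_filter -enumT.
rewrite -(count_map (fun t : L.-tuple 'I_m.+1 => map val (tval t)) P).
rewrite (permP val_enum) -sum1_count big_mkcond.
by apply: eq_bigr => w _; case: (P w).
Qed.

(* Split each word over {0,...,m+1} at its first letter m+1, if any. *)
Lemma big_words_first_max m L (F : seq nat -> nat) :
  \sum_(w <- words m.+1 L) F w = \sum_(w <- words m L) F w +
  \sum_(i < L) \sum_(u <- words m i) \sum_(v <- words m.+1 (L.-1 - i)) F (u ++ m.+1 :: v).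
Proof.
elim: L F => [|L IH] F; first by rewrite !big_words0 big_ord0 addn0.
rewrite !big_wordsS big_nat_recr //=.
under eq_bigr => x _ do rewrite IH.
rewrite big_split big_ord_recl big_words0 subn0 -!addnA; congr (_ + _).
rewrite addnC; congr (_ + _).
rewrite exchange_big; apply: eq_bigr => i _.
rewrite big_wordsS; apply: eq_bigr => x _; apply: eq_bigr => u _.
by have -> : L - bump 0 i = L.-1 - i by rewrite /bump; lia.
Qed.

(* [odd_run] is the parity of the zero run that [s] continues. *)
Fixpoint even_zero_runs_after (odd_run : bool) (s : seq nat) : bool :=
  match s with
  | [::] => ~~ odd_run
  | x :: s' =>
      if x == 0 then even_zero_runs_after (~~ odd_run) s'
      else ~~ odd_run && even_zero_runs_after false s'
  end.

Definition even_zero_runs := even_zero_runs_after false.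

Lemma even_zero_runs_after_cat p u x v : x != 0 ->
  even_zero_runs_after p (u ++ x :: v) = even_zero_runs_after p u && even_zero_runs v.
Proof.
move=> x_nz; elim: u p => [|y u IH] p /=; first by rewrite (negbTE x_nz).
by case: (y == 0); rewrite IH // andbA.
Qed.

Lemma even_zero_runs_after_nseq p n :
  even_zero_runs_after p (nseq n 0) = ~~ (p (+) odd n).
Proof.
elim: n p => [|n IH] p; first by case: p.
by rewrite /= IH; case: p; case: (odd n).
Qed.

Definition zero_at (s : seq nat) p := nth 1 s p == 0.

Lemma zero_at_size s p : zero_at s p -> p < size s.
Proof. by rewrite /zero_at; case: ltnP => // h; rewrite nth_default. Qed.

Lemma zero_at_nseq_cat a t p :
  zero_at (nseq a 0 ++ t) p = (p < a) || zero_at t (p - a).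
Proof. by rewrite /zero_at nth_cat size_nseq nth_nseq; case: ltnP. Qed.

Lemma zero_at_cons x s p : x != 0 ->
  zero_at (x :: s) p = if p is p'.+1 then zero_at s p' else false.
Proof. by move=> x_nz; case: p => [|p] //=; rewrite /zero_at /= (negbTE x_nz). Qed.

Lemma max_zero_blockP s i j : max_zero_block s i j <->
  [/\ i < j, (forall p, i <= p < j -> zero_at s p),
      i = 0 \/ ~~ zero_at s i.-1 & ~~ zero_at s j].
Proof.
rewrite /max_zero_block; split.
- case/and5P => lt_ij _ /allP zeros hi hj; split => //.
  + by move=> p hp; apply: zeros; rewrite mem_iota; lia.
  + by case/orP: hi => [/eqP ->|]; [left | right].
  + by case/orP: hj => [/eqP ->|//]; rewrite /zero_at nth_default.
- case=> lt_ij zeros hi hj; apply/and5P; split => //.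
  + suff /zero_at_size : zero_at s j.-1 by lia.
    by apply: zeros; lia.
  + by apply/allP => p; rewrite mem_iota => hp; apply: zeros; lia.
  + by case: hi => [->|->]; rewrite ?eqxx ?orbT.
  + by rewrite hj orbT.
Qed.

Lemma no_odd_zero_runsP s :
  reflect (forall i j, max_zero_block s i j -> ~~ odd (j - i)) (no_odd_zero_runs s).
Proof.
apply: (iffP forallP) => [H i j blk|H i]; last by apply/forallP => j; apply/implyP/H.
have /max_zero_blockP [lt_ij zeros _ _] := blk.
have /zero_at_size lt_j : zero_at s j.-1 by apply: zeros; lia.
have ord_i : i < (size s).+1 by lia.
have ord_j : j < (size s).+1 by lia.
exact: (implyP (forallP (H (Ordinal ord_i)) (Ordinal ord_j)) blk).
Qed.

Lemma max_zero_block_nseq_cat_inv a t i j :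
  ~~ zero_at t 0 -> max_zero_block (nseq a 0 ++ t) i j ->
  (i = 0 /\ j = a) \/ (a <= i /\ max_zero_block t (i - a) (j - a)).
Proof.
move=> t0 /max_zero_blockP [lt_ij zeros hi hj]; case: (ltnP i a) => [lt_ia|le_ai].
  left; split.
    by case: hi => [//|]; rewrite zero_at_nseq_cat; lia.
  case: (ltngtP j a) => // [lt_ja|lt_aj].
    by move: hj; rewrite zero_at_nseq_cat lt_ja.
  by have := zeros a; rewrite zero_at_nseq_cat ltnn subnn (negbTE t0); lia.
right; split => //; apply/max_zero_blockP; split; first lia.
- move=> p hp; have := zeros (p + a); rewrite zero_at_nseq_cat addnK.
  have -> : (p + a < a) = false by lia.
  by apply; lia.
- case: (ltngtP a i) => [lt_ai|lt_ia|->]; [|lia|by left; rewrite subnn].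
  right; case: hi => [|]; first lia.
  rewrite zero_at_nseq_cat; have -> : (i.-1 < a) = false by lia.
  by have -> : i.-1 - a = (i - a).-1 by lia.
- by move: hj; rewrite zero_at_nseq_cat (_ : j < a = false) //; lia.
Qed.

Lemma max_zero_block_nseq_prefix a t :
  0 < a -> ~~ zero_at t 0 -> max_zero_block (nseq a 0 ++ t) 0 a.
Proof.
move=> a_gt0 t0; apply/max_zero_blockP; split; [done| |by left|].
- by move=> p hp; rewrite zero_at_nseq_cat; apply/orP; left; lia.
- by rewrite zero_at_nseq_cat ltnn subnn.
Qed.

Lemma max_zero_block_nseq_shift a t i j :
  ~~ zero_at t 0 -> max_zero_block t i j ->
  max_zero_block (nseq a 0 ++ t) (i + a) (j + a).
Proof.
move=> t0 /max_zero_blockP [lt_ij zeros hi hj].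
have i_gt0 : 0 < i.
  by case: (posnP i) => // i0; move: t0; rewrite -i0 zeros //; lia.
apply/max_zero_blockP; split; first lia.
- move=> p hp; rewrite zero_at_nseq_cat; apply/orP; right; apply: zeros; lia.
- case: hi => hi; first lia.
  right; rewrite zero_at_nseq_cat; have -> : ((i + a).-1 < a) = false by lia.
  by have -> : (i + a).-1 - a = i.-1 by lia.
- by rewrite zero_at_nseq_cat addnK; have -> : (j + a < a) = false by lia.
Qed.

Lemma max_zero_block_cons x s i j : x != 0 ->
  max_zero_block (x :: s) i j <-> 0 < i /\ max_zero_block s i.-1 j.-1.
Proof.
move=> x_nz; split.
- move=> /max_zero_blockP [lt_ij zeros hi hj].
  have i_gt0 : 0 < i.
    by case: (posnP i) => // i0; have := zeros 0; rewrite zero_at_cons //; apply; lia.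
  split => //; apply/max_zero_blockP; split; first lia.
  + by move=> p hp; have := zeros p.+1; rewrite zero_at_cons //; apply; lia.
  + case: hi => hi; first lia.
    by move: hi; rewrite zero_at_cons //; case: (i) i_gt0 => [|[|i']]; [|left|right].
  + by move: hj; rewrite zero_at_cons //; case: (j) lt_ij.
- case=> i_gt0 /max_zero_blockP [lt_ij zeros hi hj]; apply/max_zero_blockP; split.
  + lia.
  + by move=> [|p] hp; rewrite zero_at_cons //; [lia | apply: zeros; lia].
  + right; rewrite zero_at_cons //.
    by case: hi; case: (i) i_gt0 => [|[|i']].
  + by rewrite zero_at_cons //; case: (j) lt_ij hj => [|j'] //; lia.
Qed.

Lemma no_odd_zero_runs_nil : no_odd_zero_runs [::].
Proof.
apply/no_odd_zero_runsP => i j /max_zero_blockP [lt_ij zeros _ _].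
by have := zeros i; rewrite /zero_at nth_nil; lia.
Qed.

Lemma no_odd_zero_runs_cons x s : x != 0 ->
  no_odd_zero_runs (x :: s) = no_odd_zero_runs s.
Proof.
move=> x_nz; apply/no_odd_zero_runsP/no_odd_zero_runsP => H i j.
  by move=> blk; rewrite -subSS; apply: H; apply/max_zero_block_cons.
move=> /(max_zero_block_cons _ _ _ x_nz) [i_gt0 blk].
have /max_zero_blockP [lt_ij _ _ _] := blk.
by have := H _ _ blk; have -> : j.-1 - i.-1 = j - i by lia.
Qed.

Lemma no_odd_zero_runs_nseq_cat a t : ~~ zero_at t 0 ->
  no_odd_zero_runs (nseq a 0 ++ t) = ~~ odd a && no_odd_zero_runs t.
Proof.
move=> t0; apply/no_odd_zero_runsP/andP => [H|[a_even /no_odd_zero_runsP H] i j blk].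
  split.
    case: (posnP a) => [-> //|a_gt0].
    by have := H 0 a (max_zero_block_nseq_prefix a_gt0 t0); rewrite subn0.
  apply/no_odd_zero_runsP => i j blk.
  by have := H _ _ (max_zero_block_nseq_shift a t0 blk); rewrite subnDr.
case: (max_zero_block_nseq_cat_inv t0 blk) => [[-> ->]|[le_ai blk']].
  by rewrite subn0.
have /max_zero_blockP [lt_ij _ _ _] := blk.
by have := H _ _ blk'; have -> : j - a - (i - a) = j - i by lia.
Qed.

Lemma no_odd_zero_runs_nseq_catE a s :
  no_odd_zero_runs (nseq a 0 ++ s) = even_zero_runs_after (odd a) s.
Proof.
elim: s a => [|x s IH] a.
  by rewrite no_odd_zero_runs_nseq_cat // no_odd_zero_runs_nil andbT.
have [->|x_nz] := eqVneq x 0.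
  by rewrite -[_ :: s]/(nseq 1 0 ++ s) catA -nseqD addn1 IH.
rewrite no_odd_zero_runs_nseq_cat /= ?(negbTE x_nz) ?no_odd_zero_runs_cons //.
by rewrite -(IH 0).
Qed.

Lemma no_odd_zero_runsE s : no_odd_zero_runs s = even_zero_runs s.
Proof. exact: (no_odd_zero_runs_nseq_catE 0 s). Qed.

Lemma size_invert_seq g n : size (invert_seq g n) = n.
Proof. by elim: n => //= n IH; rewrite size_rcons IH. Qed.

Lemma nth_invert_seq g n k : k < n -> nth 0 (invert_seq g n) k = invert g k.+1.
Proof.
elim: n => [//|n IH] lt_kn; rewrite /= nth_rcons size_invert_seq.
case: (ltngtP k n) => [/IH //||->]; first lia.
by rewrite /invert /= nth_rcons size_invert_seq ltnn eqxx.
Qed.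

Lemma invertS g n :
  invert g n.+1 = g n.+1 + \sum_(1 <= i < n.+1) g i * invert g (n.+1 - i).
Proof.
rewrite /invert /= nth_rcons size_invert_seq ltnn eqxx; congr (_ + _).
apply: eq_big_nat => i hi; rewrite nth_invert_seq; last by lia.
by have -> : (n.+1 - i).-1.+1 = n.+1 - i by lia.
Qed.

Lemma c_auxS g n k :
  c_aux g n k.+1 = \sum_(1 <= i < (n - k.+1).+2) g i * c_aux g (n - i) k.
Proof. by []. Qed.

Lemma c_aux1 g n : 0 < n -> c_aux g n 1 = g n.
Proof.
move=> n_gt0; rewrite /= subn1 prednK // big_nat_recr //= subnn muln1.
rewrite big1_seq ?add0n // => i /andP[_]; rewrite mem_index_iota => hi.
have -> : (n - i == 0) = false by lia.
exact: muln0.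
Qed.

Definition ngood m L := \sum_(w <- words m L) even_zero_runs w.

Lemma f_ngood m n : f m n.+1 = ngood m n.
Proof.
elim: m n => [|m IHm] n.
  by rewrite /ngood words0 big_seq1 /even_zero_runs even_zero_runs_after_nseq.
elim/ltn_ind: n => n IHn.
rewrite [f _ _]invertS /ngood big_words_first_max -/(ngood m n) -IHm; congr (_ + _).
rewrite big_add1 /= big_mkord; apply: eq_bigr => i _.
under eq_bigr => u _ do under eq_bigr => v _ do
  rewrite /even_zero_runs even_zero_runs_after_cat // -mulnb.
rewrite -big_distrlr -/(ngood m i) -/(ngood m.+1 _) -IHm -IHn; last first.
  by have := ltn_ord i; lia.
by have -> : (n.-1 - i).+1 = n.+1 - i.+1 by have := ltn_ord i; lia.
Qed.

Definition nmarked m L r :=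
  \sum_(w <- words m L) (even_zero_runs w && (count (pred1 m) w == r)).

Lemma count_succ_words m i u : u \in words m i -> count (pred1 m.+1) u = 0.
Proof.
rewrite mem_words => /andP[_ /allP small]; apply/eqP; rewrite -leqn0 leqNgt -has_count.
by apply/hasPn => x /small /=; rewrite neq_ltn => ->.
Qed.

Lemma nmarked0 m L : nmarked m.+1 L 0 = ngood m L.
Proof.
rewrite /nmarked big_words_first_max [X in _ + X]big1 ?addn0.
  by apply: eq_big_seq => w /count_succ_words ->; rewrite andbT.
move=> i _; apply: big1 => u _; apply: big1 => v _.
by rewrite count_cat /= eqxx addnCA add1n andbF.
Qed.

Lemma nmarkedS m L r :
  nmarked m.+1 L r.+1 = \sum_(i < L) ngood m i * nmarked m.+1 (L.-1 - i) r.
Proof.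
rewrite /nmarked big_words_first_max big1_seq ?add0n; last first.
  by move=> w /andP[_ /count_succ_words ->]; rewrite andbF.
apply: eq_bigr => i _; rewrite big_distrlr; apply: eq_big_seq => u /count_succ_words u0.
apply: eq_bigr => v _; rewrite /even_zero_runs even_zero_runs_after_cat //.
by rewrite count_cat u0 /= eqxx add1n eqSS mulnb andbA.
Qed.

Lemma nmarked_small m L r : L < r -> nmarked m L r = 0.
Proof.
move=> lt_Lr; apply: big1_seq => w /andP[_]; rewrite mem_words => /andP[/eqP sw _].
by have := count_size (pred1 m) w; rewrite sw; case: eqP; rewrite ?andbF //; lia.
Qed.

Lemma c_aux_nmarked m n k : k < n -> c_aux (f m) n k.+1 = nmarked m.+1 n.-1 k.
Proof.
elim: k n => [|k IH] n lt_kn; first by rewrite c_aux1 // nmarked0 -f_ngood prednK.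
rewrite c_auxS nmarkedS.
have -> : (n - k.+2).+2 = n - k by lia.
rewrite (big_addn 0 (n - k) 1).
rewrite -(big_mkord xpredT (fun i => ngood m i * nmarked m.+1 (n.-2 - i) k)).
rewrite [RHS](big_cat_nat _ (n := n - k - 1)) //; last by lia.
(* The recurrence of c stops at i = n - k - 1; the later terms of nmarkedS
   count words with too few letters left for k marks. *)
rewrite [X in _ = _ + X]big1_seq ?addn0; last first.
  move=> i /andP[_]; rewrite mem_index_iota => hi.
  by rewrite nmarked_small ?muln0 //; lia.
apply: eq_big_nat => i hi; rewrite addn1 f_ngood IH; last by lia.
by have -> : (n - i.+1).-1 = n.-2 - i by lia.
Qed.

Theorem corollary23 (m n k : nat) :
  1 <= m -> 1 <= k -> k <= n ->
  c m n k = nwords m n.-1 k.-1.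
Proof.
case: m => [//|m] _; case: k => [//|k] _ le_kn.
rewrite /c c_aux_nmarked // /nmarked -card_tuples_words /nwords.
congr #|pred_of_set _|; apply/setP => w.
by rewrite !inE count_map no_odd_zero_runsE andbC.
Qed.
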